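(* Let $W$ be a cocompact discrete reflection group of a CAT(0) space $X$, let $C$ be a chamber, and let $S$ be a minimal subset of the set $R$ of reflections in $W$ such that $C=\bigcap_{s\in S}X_s^+$. Let $w\in W$, let $w=s_1\cdots s_l$ be a reduced representation ($s_i\in S$, $l=\ell(w)$), and let $T=\{s_1,\dots,s_l\}$. Then $$\overline{C}\cap w\overline{C}=\bigcap_{t\in T}(F_t\cap\overline{C})=\bigcap_{t\in T}(t\overline{C}\cap\overline{C})=\bigcap_{v\in W_T}v\overline{C}.$$
   Context: An isometry $r$ of a geodesic space $X$ is a reflection if $r^2=\mathrm{id}$, the fixed-point set $F_r$ (the wall of $r$) has empty interior, $X\setminus F_r$ has exactly two convex connected components, and $r$ interchanges them. A reflection group is an isometry group generated by reflections. Let $W$ be a reflection group of $X$ acting properly (i.e. $\{\gamma\in W: \gamma x\in B(x,N)\}$ is finite for all $x\in X$, $N>0$), and $R$ the set of all reflections of $X$ lying in $W$. A chamber is a connected component $C$ of $X\setminus\bigcup_{r\in R}F_r$. $W$ is a cocompact discrete reflection group if $\overline{C}$ is compact and $\{\gamma\in W: \gamma C=C\}=\{1\}$. For $r\in R$, $X_r^+$ denotes the component of $X\setminus F_r$ containing $C$. $S\subset R$ is minimal with $C=\bigcap_{s\in S}X_s^+$; then $(W,S)$ is a Coxeter system, and $\ell$ is word length with respect to $S$. For $T\subset S$, $W_T$ is the subgroup generated by $T$. *)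

From mathcomp Require Import all_boot all_order all_algebra.
From mathcomp Require Import boolp classical_sets cardinality reals.
Set Implicit Arguments. Unset Strict Implicit. Unset Printing Implicit Defensive.
Import Order.TTheory GRing.Theory Num.Theory.
Local Open Scope classical_set_scope.
Local Open Scope ring_scope.

Section Geometry.
Context {R : realType} {X : Type} (d : X -> X -> R).

Definition is_metric : Prop :=
  [/\ (forall x y, 0 <= d x y), (forall x y, d x y = 0 <-> x = y),
      (forall x y, d x y = d y x) & (forall x y z, d x z <= d x y + d y z)].

Definition mball (x : X) (e : R) : set X := [set y | d x y < e].

Definition mopen (U : set X) : Prop :=
  forall x, U x -> exists2 e, 0 < e & mball x e `<=` U.

Definition mclosure (A : set X) : set X :=
  [set x | forall e, 0 < e -> exists y, A y /\ mball x e y].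

Definition mcompact (K : set X) : Prop :=
  forall F : set (set X), (forall U, F U -> mopen U) ->
    K `<=` \bigcup_(U in F) U ->
    exists G : set (set X), [/\ G `<=` F, finite_set G & K `<=` \bigcup_(U in G) U].

Definition mconnected (A : set X) : Prop :=
  forall U V, mopen U -> mopen V -> A `<=` U `|` V ->
    A `&` U `&` V = set0 -> A `&` U = set0 \/ A `&` V = set0.

Definition mcomponent (Y C : set X) : Prop :=
  [/\ C `<=` Y, C !=set0, mconnected C &
      forall D, mconnected D -> C `<=` D -> D `<=` Y -> D = C].

Definition geodesic (g : R -> X) (x y : X) : Prop :=
  [/\ g 0 = x, g (d x y) = y &
      forall s t, 0 <= s <= d x y -> 0 <= t <= d x y -> d (g s) (g t) = `|s - t|].

Definition geodesic_space : Prop := forall x y, exists g, geodesic g x y.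

Definition mconvex (A : set X) : Prop :=
  forall x y, A x -> A y ->
    (exists g, geodesic g x y) /\
    forall g, geodesic g x y -> forall t, 0 <= t <= d x y -> A (g t).

Definition edist (a b : R * R) : R :=
  Num.sqrt ((a.1 - b.1) ^+ 2 + (a.2 - b.2) ^+ 2).

(** CAT(0) inequality for geodesic triangles: triangle with vertices p i,
    side g i a geodesic from p i to p (i+1 mod 3), comparison triangle p'. *)
Definition CAT0 : Prop :=
  [/\ is_metric, geodesic_space &
    forall (p : 'I_3 -> X) (g : 'I_3 -> R -> X) (p' : 'I_3 -> R * R),
      (forall i, geodesic (g i) (p i) (p (ordS i))) ->
      (forall i, edist (p' i) (p' (ordS i)) = d (p i) (p (ordS i))) ->
      let L i := d (p i) (p (ordS i)) in
      let cmp i s := ((p' i).1 + s / L i * ((p' (ordS i)).1 - (p' i).1),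
                      (p' i).2 + s / L i * ((p' (ordS i)).2 - (p' i).2)) in
      forall i j s t, 0 <= s <= L i -> 0 <= t <= L j ->
        d (g i s) (g j t) <= edist (cmp i s) (cmp j t)].

Definition isometry (f : X -> X) : Prop :=
  bijective f /\ forall x y, d (f x) (f y) = d x y.

Definition fixpts (r : X -> X) : set X := [set x | r x = x].

Definition reflection (r : X -> X) : Prop :=
  [/\ isometry r, r \o r = id,
      (forall x e, 0 < e -> ~ (mball x e `<=` fixpts r)) &
      exists A B : set X,
        [/\ A <> B, (forall D, mcomponent (~` fixpts r) D <-> D = A \/ D = B),
            mconvex A, mconvex B & r @` A = B]].

Definition prod_list (s : seq (X -> X)) : X -> X := foldr (fun f g => f \o g) id s.

Definition all_in (P : set (X -> X)) (s : seq (X -> X)) : Prop :=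
  forall i, (i < size s)%N -> P (nth id s i).

Definition gen_letter (T : set (X -> X)) (a : X -> X) : Prop :=
  exists2 t, T t & (a = t \/ (a \o t = id /\ t \o a = id)).

Definition generated (T : set (X -> X)) : set (X -> X) :=
  [set w | exists s, all_in (gen_letter T) s /\ prod_list s = w].

Definition isometry_group (W : set (X -> X)) : Prop :=
  [/\ (forall w, W w -> isometry w), W id,
      (forall u v, W u -> W v -> W (u \o v)) &
      (forall w, W w -> exists2 v, W v & v \o w = id /\ w \o v = id)].

Definition reflections_in (W : set (X -> X)) : set (X -> X) :=
  [set r | W r /\ reflection r].

Definition reflection_group (W : set (X -> X)) : Prop :=
  isometry_group W /\ W = generated (reflections_in W).

Definition acts_properly (W : set (X -> X)) : Prop :=
  forall x N, 0 < N -> finite_set [set g | W g /\ mball x N (g x)].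

Definition chamber (W : set (X -> X)) (C : set X) : Prop :=
  mcomponent (~` \bigcup_(r in reflections_in W) fixpts r) C.

Definition cocompact_discrete (W : set (X -> X)) : Prop :=
  [/\ reflection_group W, acts_properly W &
      forall C, chamber W C ->
        mcompact (mclosure C) /\ [set g | W g /\ g @` C = C] = [set id]]. 

(** X_r^+ : the component of X \ F_r containing C *)
Definition halfspace (r : X -> X) (C : set X) : set X :=
  [set x | exists D, [/\ mcomponent (~` fixpts r) D, C `<=` D & D x]].

Definition minimal_wall_set (W : set (X -> X)) (C : set X) (S : set (X -> X)) : Prop :=
  [/\ S `<=` reflections_in W, C = \bigcap_(s in S) halfspace s C &
      forall S', S' `<=` S -> C = \bigcap_(s in S') halfspace s C -> S' = S].

Definition reduced_word (S : set (X -> X)) (w : X -> X) (s : seq (X -> X)) : Prop :=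
  [/\ all_in S s, prod_list s = w &
      forall t, all_in S t -> prod_list t = w -> (size s <= size t)%N].

Definition letters (s : seq (X -> X)) : set (X -> X) :=
  [set t | exists2 i, (i < size s)%N & t = nth id s i].

End Geometry.

(* Let x be a point of C̄ ∩ wC̄ and s the first letter of a reduced word for w.
   If s moved x, then x would lie strictly on C's side of the wall F_s, hence so
   would the chamber wC.  Along the prefixes u_k of the rest of the word the
   chambers s u_k C then pass from sC, beyond F_s, to wC, on C's side; where they
   cross, the reflection u_k^-1 s u_k separates C from its neighbour t_k C.  A
   reflection separating C from tC with t ∈ S is t itself, so s u_k = u_k t_k,
   and deleting s and t_k shortens the word.  By induction every letter fixes x,
   and conversely a point of C̄ ∩ tC̄ lies on F_t.

   The adjacency fact is local.  By minimality of S there is a point p of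
   F_t ∩ C̄ near which C is just the t-side of F_t.  A reflection r separating C
   from tC must fix p, and it maps some point of C near p to a point beyond F_t
   whose t-image is again in C; since W acts freely on chambers, tr = 1. *)

From mathcomp Require Import all_boot all_order all_algebra.
From mathcomp Require Import boolp classical_sets cardinality reals.
From mathcomp Require Import lra zify.
Set Implicit Arguments. Unset Strict Implicit. Unset Printing Implicit Defensive.
Import Order.TTheory GRing.Theory Num.Theory.
Local Open Scope classical_set_scope.
Local Open Scope ring_scope.

Lemma image_can (aT rT : Type) (g : aT -> rT) (h : rT -> aT) (A : set aT) :
  cancel g h -> cancel h g -> g @` A = h @^-1` A.
Proof.
move=> gK hK; apply/seteqP; split => [_ [a Aa <-]|z Ahz]; first by rewrite /preimage /= gK.
by exists (h z); rewrite ?hK.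
Qed.

Lemma image_canK (aT rT : Type) (g : aT -> rT) (h : rT -> aT) (A : set aT) :
  cancel g h -> h @` (g @` A) = A.
Proof. by move=> gK; rewrite image_comp eq_image_id // => x _; exact: gK. Qed.

Lemma fixpts_conj (X : Type) (g h r : X -> X) : cancel g h -> cancel h g ->
  fixpts (g \o r \o h) = g @` fixpts r.
Proof.
move=> gK hK; rewrite (image_can _ gK hK); apply/seteqP; split => z.
  by rewrite /fixpts /preimage /= => e; rewrite -{2}e gK.
by rewrite /fixpts /preimage /= => ->; rewrite hK.
Qed.

Lemma image_conj (X : Type) (g h r : X -> X) (A : set X) : cancel g h ->
  (g \o r \o h) @` (g @` A) = g @` (r @` A).
Proof. by move=> gK; rewrite !image_comp; apply: eq_imagel => x _ /=; rewrite gK. Qed.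

Section Words.
Context {X : Type}.
Implicit Types (l : seq (X -> X)) (P : set (X -> X)).

Lemma prod_list_cat l1 l2 : prod_list (l1 ++ l2) = prod_list l1 \o prod_list l2.
Proof. by elim: l1 => [|a l1 IH] //=; rewrite IH. Qed.

Lemma all_in_cons P a l : all_in P (a :: l) <-> P a /\ all_in P l.
Proof.
split; first by move=> h; split; [apply: (h 0%N) | move=> i il; apply: (h i.+1)].
by move=> [Pa h] [|i] //= il; apply: h.
Qed.

Lemma all_in_take P l k : all_in P l -> all_in P (take k l).
Proof.
move=> h i; rewrite size_take => il.
have [ik isz] : (i < k)%N /\ (i < size l)%N by move: il; case: ifP => kl il; lia.
by rewrite nth_take //; apply: h.
Qed.

Lemma all_in_drop P l k : all_in P l -> all_in P (drop k l).
Proof. by move=> h i; rewrite size_drop nth_drop => il; apply: h; lia. Qed.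

Lemma all_in_cat P l1 l2 : all_in P l1 -> all_in P l2 -> all_in P (l1 ++ l2).
Proof.
move=> h1 h2 i; rewrite size_cat nth_cat; case: (ltnP i (size l1)) => il iS; first exact: h1.
by apply: h2; lia.
Qed.

Lemma generated_id P : generated P id.
Proof. by exists [::]; split => // i; rewrite ltn0. Qed.

Lemma generated_letter P t : P t -> generated P t.
Proof. by move=> Pt; exists [:: t]; split => // -[|//] _; exists t => //; left. Qed.

Lemma prod_list_fixpt l x :
  (forall i, (i < size l)%N -> nth id l i x = x) -> prod_list l x = x.
Proof.
elim: l => [|a l IH] //= h; rewrite IH; first exact: (h 0%N).
by move=> i il; apply: (h i.+1).
Qed.

Lemma letters_cons a l t : letters (a :: l) t <-> t = a \/ letters l t.
Proof.
split => [[[|i] il ->]|[->|[i il ->]]]; [by left | by right; exists i | by exists 0%N |].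
by exists i.+1.
Qed.

Lemma prod_list_exchange a l k : involutive a ->
  a \o prod_list (take k l) = prod_list (take k.+1 l) ->
  prod_list (a :: l) = prod_list (take k l ++ drop k.+1 l).
Proof.
move=> aK e; rewrite /= -{1}(cat_take_drop k.+1 l) !prod_list_cat -e.
by apply: funext => y /=; rewrite aK.
Qed.

End Words.

Lemma nat_switch (Q : nat -> Prop) a b : (a <= b)%N -> Q a -> ~ Q b ->
  exists k, [/\ (a <= k < b)%N, Q k & ~ Q k.+1].
Proof.
elim: b => [|b IH] ab Qa nQb; first by move: ab; rewrite leqn0 => /eqP ab; subst a.
have [ab'|ab'] : (a <= b)%N \/ a = b.+1 by lia.
  have [Qb|nQb'] := pselect (Q b); first by exists b; split => //; rewrite ab' ltnSn.
  have [k [/andP[ak kb] Qk nQk]] := IH ab' Qa nQb'.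
  by exists k; split => //; rewrite ak ltnS ltnW.
by subst a; case: nQb.
Qed.

Section RealSegment.
Context {R : realType}.
Implicit Types (L t : R) (P Q : R -> Prop).

Definition segment_open L P := forall t, 0 <= t <= L -> P t ->
  exists2 e, 0 < e & forall t', 0 <= t' <= L -> `|t - t'| < e -> P t'.

Lemma segment_connected L P Q : segment_open L P -> segment_open L Q ->
  (forall t, 0 <= t <= L -> P t \/ Q t) ->
  (forall t, 0 <= t <= L -> P t -> Q t -> False) ->
  P 0 -> forall t, 0 <= t <= L -> P t.
Proof.
move=> oP oQ PQ nPQ P0 t1 /andP[t10 t1L]; apply: contrapT => nPt1.
pose E := [set t | 0 <= t <= t1 /\ forall t', 0 <= t' <= t -> P t'].
have E0 : E 0.
  split; first by rewrite lexx t10.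
  by move=> t' t'0; have -> : t' = 0 by apply/le_anti; rewrite andbC.
have hsE : has_sup E by split; [exists 0 | exists t1 => t [/andP[_ h] _]].
pose s := sup E.
have s0 : 0 <= s by apply: sup_upper_bound.
have st1 : s <= t1 by apply: ge_sup => //; [exists 0 | move=> t [/andP[]]].
have sI : 0 <= s <= L by rewrite s0 (le_trans st1 t1L).
have [Ps|Qs] := PQ s sI.
- have [e e0 he] := oP s sI Ps.
  have slt : s < t1.
    by rewrite lt_neqAle st1 andbT; apply: contraPneq nPt1 => <-.
  pose tau := Num.min (s + e / 2) t1.
  have tau_le : tau <= s + e / 2 by rewrite ge_min lexx.
  have Etau : E tau.
    split; first by rewrite /tau le_min ge_min lexx orbT t10 andbT addr_ge0 // divr_ge0 // ltW.
    move=> t' /andP[t'0 t'tau]; have t'L : t' <= L.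
      by rewrite (le_trans t'tau) // (le_trans _ t1L) // /tau ge_min lexx orbT.
    have [t's|st'] := ltP t' s.
      have st'0 : 0 < s - t' by rewrite subr_gt0.
      have [u [_ Pu]] := sup_adherent st'0 hsE.
      by rewrite -/s opprB addrC subrK => t'u; apply: Pu; rewrite t'0 ltW.
    apply: he; first by rewrite t'0.
    by rewrite distrC ger0_norm ?subr_ge0 //; move: tau_le t'tau e0; lra.
  have := sup_upper_bound hsE Etau; rewrite -/s ge_min => /orP[|]; last by rewrite leNgt slt.
  by rewrite gerDl leNgt divr_gt0.
- have [e e0 he] := oQ s sI Qs.
  have [tau Etau stau] := sup_adherent e0 hsE.
  have [/andP[tau0 taut1] Ptau] := Etau.
  have tauI : 0 <= tau <= L by rewrite tau0 (le_trans taut1 t1L).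
  apply: (nPQ tau tauI); first by apply: Ptau; rewrite tau0 lexx.
  apply: he => //; rewrite ger0_norm ?subr_ge0; last exact: (sup_upper_bound hsE).
  by move: stau; rewrite -/s; lra.
Qed.

Lemma common_radius (T : eqType) (P : T -> R -> Prop) (l : seq T) :
  (forall a e e', P a e -> 0 < e' <= e -> P a e') ->
  (forall a, a \in l -> exists2 e, 0 < e & P a e) ->
  exists2 e, 0 < e & forall a, a \in l -> P a e.
Proof.
move=> mono; elim: l => [|a l IH] h; first by exists 1.
have [ea ea0 Pa] := h a (mem_head _ _).
have [el el0 Pl] := IH (fun b bl => h b (ltac:(by rewrite in_cons bl orbT))).
exists (Num.min ea el) => [|b]; first by rewrite lt_min ea0.
rewrite in_cons => /orP[/eqP ->|bl].
  by apply: (mono _ ea _ Pa); rewrite lt_min ea0 el0 ge_min lexx.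
by apply: (mono _ el _ (Pl b bl)); rewrite lt_min ea0 el0 ge_min lexx orbT.
Qed.

End RealSegment.

(** * Geodesic metric spaces *)

Section MetricSpace.
Context {R : realType} {X : Type} (d : X -> X -> R).
Hypotheses (metric_d : is_metric d) (geodesic_d : geodesic_space d).
Implicit Types (x y z : X) (A U V Y : set X).

Lemma dist_ge0 x y : 0 <= d x y. Proof. by case: metric_d. Qed.
Lemma distC x y : d x y = d y x. Proof. by case: metric_d. Qed.
Lemma dist_triangle x y z : d x z <= d x y + d y z. Proof. by case: metric_d. Qed.
Lemma dist_eq0 x y : d x y = 0 <-> x = y. Proof. by case: metric_d. Qed.
Lemma dist_xx x : d x x = 0. Proof. exact/dist_eq0. Qed.

Lemma mball_center x e : 0 < e -> mball d x e x.
Proof. by rewrite /mball /= dist_xx. Qed.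

Lemma mball_le x e e' : e' <= e -> mball d x e' `<=` mball d x e.
Proof. by move=> e'e y /lt_le_trans; apply. Qed.

Lemma mopen_closure_disjoint U A y : mopen d U -> U y -> A `&` U = set0 ->
  ~ mclosure d A y.
Proof.
move=> oU Uy AU cl; have [e e0 sub] := oU y Uy.
have [z [Az yz]] := cl e e0.
have : (A `&` U) z by split => //; exact: sub.
by rewrite AU.
Qed.

Lemma mopen_setC_fixpts r : isometry d r -> mopen d (~` fixpts r).
Proof.
move=> [_ rI] y ry.
have ry0 : 0 < d y (r y).
  rewrite lt_def dist_ge0 andbT; apply: contra_notN ry => /eqP/dist_eq0 ry.
  by rewrite /fixpts /= -ry.
exists (d y (r y) / 2) => [|z yz rz]; first by rewrite divr_gt0.
have := dist_triangle y z (r y); rewrite -{2}rz rI (distC z y).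
by move: yz; rewrite /mball /=; lra.
Qed.

Lemma mclosure_fixpts r : isometry d r -> mclosure d (fixpts r) `<=` fixpts r.
Proof.
move=> ri y cl; apply: contrapT => ry.
by apply: mopen_closure_disjoint (mopen_setC_fixpts ri) ry _ cl; rewrite setICr.
Qed.

Lemma mconnected_bigcup (F : set (set X)) x :
  (forall A, F A -> mconnected d A /\ A x) -> mconnected d (\bigcup_(A in F) A).
Proof.
move=> HF U V oU oV cov disj.
have side A : F A -> (U x -> A `&` V = set0) /\ (V x -> A `&` U = set0).
  move=> FA; have [cA Ax] := HF A FA.
  have AUV : A `<=` U `|` V by move=> z Az; apply: cov; exists A.
  have AUV0 : A `&` U `&` V = set0.
    apply/seteqP; split => // z [[Az Uz] Vz]; rewrite -disj; do 2?split => //.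
    by exists A.
  have [h|h] := cA U V oU oV AUV AUV0; split => hx //.
    by have : (A `&` U) x by []; rewrite h.
  by have : (A `&` V) x by []; rewrite h.
have [[A0 FA0] | nF] := pselect (exists A, F A); last first.
  by left; apply/seteqP; split => // z [[A FA _] _]; case: nF; exists A.
have [_ A0x] := HF A0 FA0.
have [Ux|Vx] : U x \/ V x by apply: cov; exists A0.
  right; apply/seteqP; split => // z [[A FA Az] Vz].
  by have : (A `&` V) z by []; rewrite ((side A FA).1 Ux).
left; apply/seteqP; split => // z [[A FA Az] Uz].
by have : (A `&` U) z by []; rewrite ((side A FA).2 Vx).
Qed.

Lemma mconnected_setU A B x : mconnected d A -> mconnected d B -> A x -> B x ->
  mconnected d (A `|` B).
Proof.
move=> cA cB Ax Bx.
have -> : A `|` B = \bigcup_(K in [set A; B]) K.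
  apply/seteqP; split => z; last by case=> K [->|->] Kz; [left | right].
  by case=> h; [exists A => //; left | exists B => //; right].
by apply: (mconnected_bigcup (x := x)) => K [->|->].
Qed.

Lemma mconnected_set1 x : mconnected d [set x].
Proof.
move=> U V _ _ cov disj.
have nUV : ~ (U x /\ V x).
  by move=> [Ux Vx]; have : ([set x] `&` U `&` V) x by []; rewrite disj.
by have [Ux|Vx] := cov x erefl; [right | left];
  apply/seteqP; split => // _ [-> ?]; case: nUV.
Qed.

Definition mcomponent_of Y x :=
  \bigcup_(A in [set A | [/\ mconnected d A, A `<=` Y & A x]]) A.

Lemma mcomponent_ofP Y x : Y x -> mcomponent d Y (mcomponent_of Y x) /\ mcomponent_of Y x x.
Proof.
move=> Yx; have cx : mcomponent_of Y x x.
  by exists [set x] => //; split => [|z ->|]; [exact: mconnected_set1 | |].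
split => //; split.
- by move=> z [A [_ AY _] Az]; exact: AY.
- by exists x.
- by apply: (mconnected_bigcup (x := x)) => A [].
- move=> D cD sub DY; apply/seteqP; split => // z Dz.
  by exists D => //; split => //; exact: sub.
Qed.

Lemma mcomponent_sub Y D K : mcomponent d Y D -> mconnected d K -> K `<=` Y ->
  K `&` D !=set0 -> K `<=` D.
Proof.
move=> [DY _ cD maxD] cK KY [z [Kz Dz]].
have KDY : K `|` D `<=` Y by move=> y [/KY|/DY].
have <- := maxD _ (mconnected_setU cK cD Kz Dz) (fun y => @or_intror _ _) KDY.
by move=> y Ky; left.
Qed.

Lemma mcomponent_eq Y D1 D2 : mcomponent d Y D1 -> mcomponent d Y D2 ->
  D1 `&` D2 !=set0 -> D1 = D2.
Proof.
move=> c1 c2 [z [z1 z2]]; have [D1Y _ cD1 _] := c1; have [D2Y _ cD2 _] := c2.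
by apply/seteqP; split; [apply: mcomponent_sub c2 _ _ _ | apply: mcomponent_sub c1 _ _ _];
  try exists z.
Qed.

Definition geodesic_segment (g : R -> X) x y := g @` [set t : R | 0 <= t <= d x y].

Lemma geodesic_dist g x y t : geodesic d g x y -> 0 <= t <= d x y -> d x (g t) = t.
Proof.
move=> [g0 _ gI] /andP[t0 tL]; rewrite -{1}g0 gI ?lexx ?dist_ge0 ?t0 ?tL //.
by rewrite sub0r normrN ger0_norm.
Qed.

Lemma geodesic_segment_connected g x y : geodesic d g x y ->
  mconnected d (geodesic_segment g x y).
Proof.
move=> gg U V oU oV cov disj; have [g0 _ gI] := gg.
have openI (Z : set X) : mopen d Z -> segment_open (d x y) (fun t => Z (g t)).
  move=> oZ t tI Zt; have [e e0 sub] := oZ _ Zt.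
  by exists e => // t' t'I tt'; apply: sub; rewrite /mball /= gI.
have covI (t : R) : 0 <= t <= d x y -> U (g t) \/ V (g t) by move=> tI; apply: cov; exists t.
have disjI (t : R) : 0 <= t <= d x y -> U (g t) -> V (g t) -> False.
  move=> tI Ut Vt; suff : (geodesic_segment g x y `&` U `&` V) (g t) by rewrite disj.
  by do 2?split => //; exists t.
have I0 : (0 : R) <= 0 <= d x y by rewrite lexx dist_ge0.
have [U0|V0] := covI 0 I0; [right | left]; apply/seteqP; split => // _ [[t /= tI <-]] Zt.
  apply: (disjI t tI _ Zt).
  exact (segment_connected (openI _ oU) (openI _ oV) covI disjI U0 tI).
apply: (disjI t tI Zt).
have covI' (s : R) : 0 <= s <= d x y -> V (g s) \/ U (g s).
  by move=> sI; rewrite or_comm; apply: covI.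
have disjI' (s : R) : 0 <= s <= d x y -> V (g s) -> U (g s) -> False.
  by move=> sI Vs Us; apply: disjI Us Vs.
exact (segment_connected (openI _ oV) (openI _ oU) covI' disjI' V0 tI).
Qed.

Section DistancePreserving.
Variable f : X -> X.
Hypothesis fI : forall x y, d (f x) (f y) = d x y.

Lemma mopen_preimage U : mopen d U -> mopen d (f @^-1` U).
Proof.
move=> oU x Ufx; have [e e0 sub] := oU _ Ufx.
by exists e => // y xy; apply: sub; rewrite /mball /= !fI.
Qed.

Lemma mconnected_image A : mconnected d A -> mconnected d (f @` A).
Proof.
move=> cA U V oU oV cov disj.
have cov' : A `<=` f @^-1` U `|` f @^-1` V by move=> a Aa; apply: cov; exists a.
have disj' : A `&` f @^-1` U `&` f @^-1` V = set0.
  apply/seteqP; split => // a [[Aa Ua] Va].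
  suff : (f @` A `&` U `&` V) (f a) by rewrite disj.
  by do 2?split => //; exists a.
have [e|e] := cA _ _ (mopen_preimage oU) (mopen_preimage oV) cov' disj'; [left | right];
  apply/seteqP; split => // _ [[a Aa <-] Za].
  by have : (A `&` f @^-1` U) a by []; rewrite e.
by have : (A `&` f @^-1` V) a by []; rewrite e.
Qed.

Lemma geodesic_comp c x y : geodesic d c x y -> geodesic d (f \o c) (f x) (f y).
Proof.
by move=> [c0 c1 cI]; split; rewrite /= ?fI ?c0 ?c1 // => s t sI tI; rewrite fI cI.
Qed.

Lemma mclosure_image A : f @` mclosure d A `<=` mclosure d (f @` A).
Proof.
move=> _ [y cl <-] e e0; have [a [Aa ya]] := cl e e0.
by exists (f a); split; [exists a | rewrite /mball /= fI].
Qed.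

End DistancePreserving.

Lemma geodesic_leave_component F P c x y : mcomponent d (~` F) P -> P x -> ~ P y ->
  geodesic d c x y -> exists2 t, 0 <= t <= d x y & F (c t).
Proof.
move=> cP Px nPy gc; apply: contrapT => noF.
have segF : geodesic_segment c x y `<=` ~` F by move=> _ [t tI <-] Fc; apply: noF; exists t.
have segP : geodesic_segment c x y `<=` P.
  apply: (mcomponent_sub cP) => //; first exact: geodesic_segment_connected.
  by exists x; split => //; exists 0; [rewrite /= lexx dist_ge0 | case: gc].
by apply: nPy; apply: segP; exists (d x y); [rewrite /= lexx dist_ge0 | case: gc].
Qed.

Lemma mball_connected x e : mconnected d (mball d x e).
Proof.
pose F := [set K | exists y g, [/\ mball d x e y, geodesic d g x y & K = geodesic_segment g x y]].
have -> : mball d x e = \bigcup_(K in F) K.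
  apply/seteqP; split => z.
    move=> xz; have [g gg] := geodesic_d x z; exists (geodesic_segment g x z).
      by exists z, g.
    by exists (d x z); [rewrite /= dist_ge0 lexx | case: gg].
  move=> [K [y [g [xy gg ->]]]] [t tI <-].
  by rewrite /mball /= (geodesic_dist gg tI); apply: le_lt_trans xy; case/andP: tI.
apply: (mconnected_bigcup (x := x)) => K [y [g [xy gg ->]]].
split; first exact: geodesic_segment_connected gg.
by exists 0; [rewrite /= lexx dist_ge0 | case: gg].
Qed.

Lemma mcomponent_open Y D : mopen d Y -> mcomponent d Y D -> mopen d D.
Proof.
move=> oY cD y Dy; have [DY _ _ _] := cD.
have [e e0 sub] := oY y (DY y Dy); exists e => //.
apply: (mcomponent_sub cD) => //; first exact: mball_connected.
by exists y; split => //; exact: mball_center.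
Qed.

Implicit Types (r : X -> X) (K : set X).

Lemma isometry_inv_dist g h : cancel h g -> (forall x y, d (g x) (g y) = d x y) ->
  forall x y, d (h x) (h y) = d x y.
Proof. by move=> hK gI x y; rewrite -gI !hK. Qed.

Section IsometryImage.
Variables g h : X -> X.
Hypotheses (gK : cancel g h) (hK : cancel h g) (gI : forall x y, d (g x) (g y) = d x y).
Let hI := isometry_inv_dist hK gI.

Lemma mopen_image A : mopen d A -> mopen d (g @` A).
Proof. by rewrite (image_can _ gK hK); exact: (mopen_preimage hI). Qed.

Lemma mcomponent_image Y D : mcomponent d Y D -> mcomponent d (g @` Y) (g @` D).
Proof.
move=> [DY [x Dx] cD maxD]; split.
- exact: image_subset.
- by exists (g x), x.
- exact: mconnected_image.
- move=> D' cD' DD' D'Y.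
  have <- : h @` D' = D.
    apply: maxD; first exact: mconnected_image hI _ cD'.
      by move=> z Dz; exists (g z); [apply: DD'; exists z | rewrite gK].
    by move=> _ [z D'z <-]; move: (D'Y z D'z); rewrite (image_can _ gK hK).
  by rewrite image_canK.
Qed.

Lemma mconvex_image A : mconvex d A -> mconvex d (g @` A).
Proof.
rewrite (image_can _ gK hK) => cA x y Ax Ay; have [[c gc] cA_all] := cA _ _ Ax Ay.
split; first by exists (g \o c); move: (geodesic_comp gI gc); rewrite !hK.
move=> c' gc' t tI; apply: (cA_all _ (geodesic_comp hI gc')).
by rewrite hI.
Qed.

End IsometryImage.

(** * Walls of reflections *)

Record wall_sides r A B : Prop := WallSides {
  ws_componentA : mcomponent d (~` fixpts r) A;
  ws_componentB : mcomponent d (~` fixpts r) B;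
  ws_disjoint : A `&` B = set0;
  ws_cover : ~` fixpts r = A `|` B;
  ws_openA : mopen d A;
  ws_openB : mopen d B;
  ws_convexA : mconvex d A;
  ws_convexB : mconvex d B;
  ws_swapA : r @` A = B;
  ws_swapB : r @` B = A;
  ws_components : forall D, mcomponent d (~` fixpts r) D -> D = A \/ D = B }.

Lemma wall_sidesC r A B : wall_sides r A B -> wall_sides r B A.
Proof.
case=> cA cB AB0 cov oA oB vA vB rA rB comps; split; rewrite 1?setIC 1?setUC //.
by move=> D /comps[]; [right | left].
Qed.

Lemma reflection_involutive r : reflection d r -> involutive r.
Proof. by case=> _ rr _ _ x; have /= := congr1 (@^~ x) rr. Qed.

Lemma reflection_wall_sides r : reflection d r -> exists A B, wall_sides r A B.
Proof.
move=> rr; have rK := reflection_involutive rr.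
case: rr => ri _ _ [A [B [AB comps cA cB rA]]].
have compA : mcomponent d (~` fixpts r) A by apply/comps; left.
have compB : mcomponent d (~` fixpts r) B by apply/comps; right.
exists A, B; split => //.
- apply/seteqP; split => // z [Az Bz]; apply: AB; apply: mcomponent_eq compA compB _.
  by exists z.
- apply/seteqP; split => [z nz|z [Az|Bz]].
  + have [cz zz] := mcomponent_ofP nz.
    by case/comps: cz => e; [left | right]; rewrite -e.
  + by case: compA => /(_ z Az).
  + by case: compB => /(_ z Bz).
- exact: mcomponent_open (mopen_setC_fixpts ri) compA.
- exact: mcomponent_open (mopen_setC_fixpts ri) compB.
- by rewrite -rA image_canK.
- by move=> D /comps.
Qed.

Lemma wall_sides_reflection r A B : isometry d r -> involutive r ->
  (forall x e, 0 < e -> ~ (mball d x e `<=` fixpts r)) -> wall_sides r A B ->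
  reflection d r.
Proof.
move=> ri rK noint sAB; split => //; first by apply: funext => x; exact: rK.
exists A, B; split.
- move=> AB; have [a Aa] : A !=set0 by case: (ws_componentA sAB).
  have : (A `&` B) a by split => //; rewrite -AB.
  by rewrite (ws_disjoint sAB).
- move=> D; split; first exact: ws_components.
  by case=> ->; [exact: ws_componentA sAB | exact: ws_componentB sAB].
- exact: ws_convexA sAB.
- exact: ws_convexB sAB.
- exact: ws_swapA sAB.
Qed.

Lemma wall_sides_connected r A B K : wall_sides r A B -> mconnected d K ->
  K `<=` ~` fixpts r -> K !=set0 -> K `<=` A \/ K `<=` B.
Proof.
move=> sAB cK KF [k Kk].
have : (A `|` B) k by rewrite -(ws_cover sAB); apply: KF.
case=> ?; [left; apply: (mcomponent_sub (ws_componentA sAB)) |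
  right; apply: (mcomponent_sub (ws_componentB sAB))] => //; by exists k.
Qed.

Lemma wall_sides_closure r A B K y : wall_sides r A B -> K `<=` A ->
  mclosure d K y -> A y \/ fixpts r y.
Proof.
move=> sAB KA cl; have [Fy|nFy] := pselect (fixpts r y); first by right.
have : (A `|` B) y by rewrite -(ws_cover sAB).
case=> [Ay|By]; first by left.
case: (mopen_closure_disjoint (ws_openB sAB) By _ cl).
apply/seteqP; split => // z [Kz Bz]; rewrite -(ws_disjoint sAB); split => //.
exact: KA.
Qed.

Lemma reflection_nonfixed_near r x e : reflection d r -> 0 < e ->
  exists2 z, mball d x e z & ~ fixpts r z.
Proof.
move=> [_ _ noint _] e0; apply: contrapT => nex; apply: (noint x e e0) => z xz.
by apply: contrapT => nz; apply: nex; exists z.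
Qed.

Section Conjugation.
Variables g h : X -> X.
Hypotheses (gK : cancel g h) (hK : cancel h g) (gI : forall x y, d (g x) (g y) = d x y).

Lemma wall_sides_conj r A B : wall_sides r A B ->
  wall_sides (g \o r \o h) (g @` A) (g @` B).
Proof.
move=> sAB; have hI := isometry_inv_dist hK gI.
have eC : ~` fixpts (g \o r \o h) = g @` (~` fixpts r).
  by rewrite (fixpts_conj _ gK hK) !(image_can _ gK hK) preimage_setC.
split; rewrite ?eC.
- exact: mcomponent_image (ws_componentA sAB).
- exact: mcomponent_image (ws_componentB sAB).
- by rewrite !(image_can _ gK hK) -preimage_setI (ws_disjoint sAB) preimage_set0.
- by rewrite !(image_can _ gK hK) (ws_cover sAB) preimage_setU.
- exact: mopen_image (ws_openA sAB).
- exact: mopen_image (ws_openB sAB).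
- exact: mconvex_image (ws_convexA sAB).
- exact: mconvex_image (ws_convexB sAB).
- by rewrite (image_conj _ _ gK) (ws_swapA sAB).
- by rewrite (image_conj _ _ gK) (ws_swapB sAB).
- move=> D /(mcomponent_image hK gK hI); rewrite image_canK //.
  by case/(ws_components sAB) => <-; [left | right]; rewrite image_canK.
Qed.

Lemma reflection_conj r : reflection d r -> reflection d (g \o r \o h).
Proof.
move=> rr; have [A [B sAB]] := reflection_wall_sides rr.
have rK := reflection_involutive rr; case: rr => [[_ rI] _ noint _].
have hI := isometry_inv_dist hK gI.
apply: (wall_sides_reflection (A := g @` A) (B := g @` B)); last exact: wall_sides_conj.
- split; last by move=> x y; rewrite /= gI rI hI.
  by exists (g \o r \o h) => x; rewrite /= gK rK hK.
- by move=> x; rewrite /= gK rK hK.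
- move=> x e e0 sub; apply: (noint (h x) e e0) => y hxy.
  have : fixpts (g \o r \o h) (g y) by apply: sub; rewrite /mball /= -(hK x) gI.
  by rewrite /fixpts /= gK => /(congr1 h); rewrite !gK.
Qed.

End Conjugation.

(** * Chambers *)

Section Chambers.
Variables (W : set (X -> X)) (C : set X) (S : set (X -> X)).
Hypotheses (W_group : isometry_group d W) (W_proper : acts_properly d W)
  (C_chamber : chamber d W C) (C_stab : [set g | W g /\ g @` C = C] = [set id])
  (S_walls : minimal_wall_set d W C S).
Implicit Types (g s t u : X -> X) (p q : X).

Lemma W_dist g : W g -> forall x y, d (g x) (g y) = d x y.
Proof. by case: W_group => iso _ _ _ /iso []. Qed.

Lemma W_comp u v : W u -> W v -> W (u \o v).
Proof. by case: W_group => _ _ Wc _; apply: Wc. Qed.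

Lemma W_inverse g : W g -> exists h, [/\ W h, cancel g h & cancel h g].
Proof.
case: W_group => _ _ _ inv /inv[h Wh [hg gh]].
by exists h; split => // x; [move/(congr1 (@^~ x)): hg | move/(congr1 (@^~ x)): gh].
Qed.

Lemma S_reflection t : S t -> reflections_in d W t.
Proof. by case: S_walls => sub _ _ /sub. Qed.

Definition walls := \bigcup_(r in reflections_in d W) fixpts r.

Lemma walls_image g y : W g -> walls y -> walls (g y).
Proof.
move=> Wg [r [Wr rr] ry]; have [h [Wh gK hK]] := W_inverse Wg.
exists (g \o r \o h); last by rewrite /fixpts /= gK ry.
split; first by apply: W_comp => //; apply: W_comp.
exact: reflection_conj gK hK (W_dist Wg) _ rr.
Qed.

Lemma image_setC_walls g : W g -> g @` (~` walls) = ~` walls.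
Proof.
move=> Wg; have [h [Wh gK hK]] := W_inverse Wg.
rewrite (image_can _ gK hK); apply/seteqP; split => z /=.
  by move=> nhz /(walls_image Wh).
by move=> nz /(walls_image Wg); rewrite hK.
Qed.

Lemma chamber_image g K : W g -> chamber d W K -> chamber d W (g @` K).
Proof.
move=> Wg cK; have [h [Wh gK hK]] := W_inverse Wg.
by rewrite /chamber -(image_setC_walls Wg); exact: mcomponent_image gK hK (W_dist Wg) _ _ cK.
Qed.

Lemma chamber_stab_id g : W g -> g @` C `&` C !=set0 -> g = id.
Proof.
move=> Wg gCC.
have gC : g @` C = C := mcomponent_eq (chamber_image Wg C_chamber) C_chamber gCC.
by have : [set g | W g /\ g @` C = C] g by []; rewrite C_stab.
Qed.

Lemma chamber_side K r A B : chamber d W K -> reflections_in d W r ->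
  wall_sides r A B -> K `<=` A \/ K `<=` B.
Proof.
move=> cK Rr sAB; have [KZ K0 cKc _] := cK.
by apply: wall_sides_connected sAB cKc _ K0 => z /KZ nz Fz; apply: nz; exists r.
Qed.

Lemma halfspace_sides t : S t ->
  exists A B, [/\ wall_sides t A B, C `<=` A & halfspace d t C = A].
Proof.
move=> St; have [Wt Rt] := S_reflection St.
have [A [B sAB]] := reflection_wall_sides Rt.
have [c Cc] : C !=set0 by case: C_chamber.
have side_eq A' B' : wall_sides t A' B' -> C `<=` A' -> halfspace d t C = A'.
  move=> sA'B' CA'; apply/seteqP; split => [z [D [cD CD Dz]]|z A'z].
    have <- // : D = A'; apply: mcomponent_eq cD (ws_componentA sA'B') _.
    by exists c; split; [exact: CD | exact: CA'].
  by exists A'; split => //; exact: ws_componentA sA'B'.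
have [CA|CB] := chamber_side C_chamber (S_reflection St) sAB.
  by exists A, B; split => //; exact: side_eq sAB CA.
have sBA := wall_sidesC sAB.
by exists B, A; split => //; exact: side_eq sBA CB.
Qed.

Lemma chamber_halfspace t : S t -> C `<=` halfspace d t C.
Proof. by move=> /halfspace_sides[A [B [_ CA ->]]]. Qed.

Lemma halfspaces_chamber z : (forall s, S s -> halfspace d s C z) -> C z.
Proof. by case: S_walls => _ eC _ hz; rewrite eC => s Ss; apply: hz. Qed.

Lemma locally_finite_walls p (T : set (X -> X)) (H : (X -> X) -> set X) :
  T `<=` reflections_in d W ->
  (forall t, T t -> mcomponent d (~` fixpts t) (H t) /\ H t p) ->
  exists2 e, 0 < e & forall t, T t -> mball d p e `<=` H t.
Proof.
move=> TR TH.
(* Only the finitely many g in F move p by less than 1; any other reflection moves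
   every point of the ball of radius 1/2 around p, so that ball misses its wall. *)
pose F := [set g | W g /\ mball d p 1 (g p)].
have [l Fl] := (@finite_seqP {classic (X -> X)} _).1 (W_proper p ltr01).
have near_radius (a : {classic (X -> X)}) : a \in l ->
    exists2 e : R, 0 < e & (T a -> mball d p e `<=` H a).
  move=> _; have [Ta|nTa] := pselect (T a); last by exists 1 => // /nTa.
  have [cH Hp] := TH a Ta; have [_ [ri _ _ _]] := TR a Ta.
  have [e e0 sub] := mcomponent_open (mopen_setC_fixpts ri) cH Hp.
  by exists e.
have shrink (a : {classic (X -> X)}) (e e' : R) : (T a -> mball d p e `<=` H a) ->
    0 < e' <= e -> T a -> mball d p e' `<=` H a.
  by move=> h /andP[_ le_e] Ta z pz; exact: h Ta z (mball_le le_e pz).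
have [e e0 he] := common_radius shrink near_radius.
exists (Num.min e (1/2)) => [|t Tt]; first by rewrite lt_min e0 divr_gt0 ?ltr01 ?ltr0n.
have [Ft|nFt] := pselect (F t).
  apply: subset_trans (he t _ Tt); first by apply: mball_le; rewrite ge_min lexx.
  by move: Ft; rewrite /F Fl.
have [[Wt _] [cH Hp]] := (TR t Tt, TH t Tt).
apply: (mcomponent_sub cH); first exact: mball_connected.
  move=> z pz tz; apply: nFt; split => //; rewrite /mball /=.
  have := dist_triangle p z (t p); rewrite -{2}tz (W_dist Wt) (distC z p).
  by move: pz; rewrite /mball /= lt_min => /andP[_]; lra.
by exists p; split => //; apply: (mball_center); rewrite lt_min e0 divr_gt0 ?ltr01 ?ltr0n.
Qed.

Lemma halfspace_component s : S s -> mcomponent d (~` fixpts s) (halfspace d s C).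
Proof. by move=> /halfspace_sides[A [B [sAB _ ->]]]; exact: ws_componentA sAB. Qed.

Lemma halfspace_convex s : S s -> mconvex d (halfspace d s C).
Proof. by move=> /halfspace_sides[A [B [sAB _ ->]]]; exact: ws_convexA sAB. Qed.

Lemma minimal_wall_witness t : S t ->
  exists y, (forall s, S s -> s <> t -> halfspace d s C y) /\ ~ halfspace d t C y.
Proof.
move=> St; apply: contrapT => noy; case: S_walls => _ eC minS.
have eC' : C = \bigcap_(s in S `\ t) halfspace d s C.
  apply/seteqP; split => [z Cz s [Ss _]|z hz]; first exact: chamber_halfspace.
  apply: halfspaces_chamber => s Ss; have [->|st] := pselect (s = t); last exact: hz.
  by apply: contrapT => nHz; apply: noy; exists z; split => // s' Ss' s't; apply: hz.
have /seteqP[_ /(_ t St)[_]] := minS _ (@subDsetl _ S [set t]) eC'.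
by apply.
Qed.

Lemma wall_point t : S t -> exists p eps, [/\ t p = p, 0 < eps &
  forall z, d p z < eps -> halfspace d t C z -> C z].
Proof.
move=> St; have [y [yH nHy]] := minimal_wall_witness St.
have [c Cc] : C !=set0 by case: C_chamber.
have [gam gg] := geodesic_d c y.
have [tau tauI tp] := geodesic_leave_component (halfspace_component St)
  (chamber_halfspace St Cc) nHy gg.
have Hp s : (S `\ t) s -> halfspace d s C (gam tau).
  move=> [Ss st]; have [_ convex] := halfspace_convex Ss (chamber_halfspace Ss Cc) (yH s Ss st).
  exact: convex gg tau tauI.
have [eps eps0 heps] := locally_finite_walls (p := gam tau) (T := S `\ t)
  (fun s Ss => S_reflection Ss.1) (fun s Ss => conj (halfspace_component Ss.1) (Hp s Ss)).
exists (gam tau), eps; split => // z pz Hz; apply: halfspaces_chamber => s Ss.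
by have [->|st] := pselect (s = t); last exact: heps.
Qed.

Section NearWallPoint.
Variables (t : X -> X) (p : X) (eps : R).
Hypotheses (St : S t) (tp : t p = p) (eps0 : 0 < eps)
  (near_p : forall z, d p z < eps -> halfspace d t C z -> C z).

Lemma chamber_near_wall_point e : 0 < e -> exists2 q, C q & d p q < e.
Proof.
move=> e0; have [Wt Rt] := S_reflection St.
have [Ht [Ht' [sH CH eH]]] := halfspace_sides St.
have del0 : 0 < Num.min e eps by rewrite lt_min e0 eps0.
have [z pz nz] := reflection_nonfixed_near p Rt del0.
move: pz; rewrite /mball /= lt_min => /andP[pze pzeps].
have : (Ht `|` Ht') z by rewrite -(ws_cover sH).
case=> [Hz|H'z]; first by exists z => //; apply: near_p; rewrite ?eH.
have ptz : d p (t z) = d p z by rewrite -{1}tp (W_dist Wt).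
exists (t z); rewrite ?ptz //; apply: near_p; rewrite ?ptz ?eH //.
by rewrite -(ws_swapB sH); exists z.
Qed.

Lemma separating_reflection_fixes r P Q : reflections_in d W r -> wall_sides r P Q ->
  C `<=` P -> t @` C `<=` Q -> r p = p.
Proof.
move=> [Wr [ri _ _ _]] sPQ CP tCQ; apply: (mclosure_fixpts ri) => e e0.
have e30 : 0 < e / 3 by rewrite divr_gt0.
have [q Cq pq] := chamber_near_wall_point e30.
have nPtq : ~ P (t q).
  move=> Ptq; have Qtq : Q (t q) by apply: tCQ; exists q.
  by have : (P `&` Q) (t q) by []; rewrite (ws_disjoint sPQ).
(* The geodesic from q to t q crosses F_r within d(q, t q) <= 2 d(p, q) of q. *)
have [gam gg] := geodesic_d q (t q).
have [tau tauI Fm] := geodesic_leave_component (ws_componentA sPQ) (CP q Cq) nPtq gg.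
exists (gam tau); split => //; rewrite /mball /=.
have := dist_triangle p q (gam tau); rewrite (geodesic_dist gg tauI).
have := dist_triangle q p (t q); rewrite -{2}tp (W_dist (S_reflection St).1).
move: tauI pq; rewrite (distC q p) => /andP[_]; lra.
Qed.

Lemma separating_reflection_eq r P Q : reflections_in d W r -> wall_sides r P Q ->
  C `<=` P -> t @` C `<=` Q -> r = t.
Proof.
move=> Rr sPQ CP tCQ; have rp := separating_reflection_fixes Rr sPQ CP tCQ.
have [[Wr rr] [Wt rt]] := (Rr, S_reflection St).
have [Ht [Ht' [sH CH eH]]] := halfspace_sides St.
have [q Cq pq] := chamber_near_wall_point eps0.
have [e1 e10 qHt] := ws_openA sH (CH q Cq).
pose e := Num.min (eps - d p q) e1.
have e0 : 0 < e by rewrite lt_min e10 subr_gt0 pq.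
have ball_q z : d q z < e -> C z /\ d p z < eps.
  move=> qz; have pz : d p z < eps.
    have := dist_triangle p q z; have : e <= eps - d p q by rewrite ge_min lexx.
    by move: qz; lra.
  split => //; apply: near_p => //; rewrite eH; apply: qHt.
  by apply: lt_le_trans qz _; rewrite ge_min lexx orbT.
(* Near p, z cannot lie on C's side of F_t: it would be in C ⊆ P, whereas
   z = r (r z) ∈ r P = Q.  So t z ∈ C, and t r maps r z ∈ C into C. *)
have [z rqz nz] := reflection_nonfixed_near (r q) rt e0.
have rK := reflection_involutive rr.
have [Crz prz] : C (r z) /\ d p (r z) < eps.
  by apply: ball_q; rewrite -(W_dist Wr) rK.
have pz : d p z < eps by rewrite -{1}rp (W_dist Wr) in prz.
have nHz : ~ Ht z.
  move=> Hz; have Pz : P z by apply/CP/near_p; rewrite ?eH.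
  have Qz : Q z by rewrite -(ws_swapA sPQ) -(rK z); exists (r z) => //; exact: CP.
  by have : (P `&` Q) z by []; rewrite (ws_disjoint sPQ).
have H'z : Ht' z.
  have : (Ht `|` Ht') z by rewrite -(ws_cover sH).
  by case=> // /nHz.
have Ctz : C (t z).
  have ptz : d p (t z) = d p z by rewrite -{1}tp (W_dist Wt).
  by apply: near_p; rewrite ?ptz // eH -(ws_swapB sH); exists z.
have trK : t \o r = id.
  apply: chamber_stab_id; first exact: W_comp.
  by exists (t z); split => //; exists (r z) => //=; rewrite rK.
have trx x : t (r x) = x by have /= := congr1 (@^~ x) trK.
by apply: funext => x; rewrite -{2}(trx x) (reflection_involutive rt).
Qed.

End NearWallPoint.

Lemma adjacent_reflection_eq t r P Q : S t -> reflections_in d W r -> wall_sides r P Q ->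
  C `<=` P -> t @` C `<=` Q -> r = t.
Proof.
move=> St; have [p [eps [tp eps0 near_p]]] := wall_point St.
exact: (separating_reflection_eq St tp eps0 near_p).
Qed.

Lemma chamber_side_closure K r A B x : chamber d W K -> reflections_in d W r ->
  wall_sides r A B -> mclosure d K x -> A x -> K `<=` A.
Proof.
move=> cK Rr sAB Kx Ax; have [//|KB] := chamber_side cK Rr sAB.
have [AF _ _ _] := ws_componentA sAB.
have [Bx|Fx] := wall_sides_closure (wall_sidesC sAB) KB Kx; last by case: (AF x Ax).
by have : (A `&` B) x by []; rewrite (ws_disjoint sAB).
Qed.

(** * Exchange condition *)

Lemma W_prod_list l : all_in S l -> W (prod_list l).
Proof.
elim: l => [|a l IH] /=; first by case: W_group.
by case/all_in_cons => Sa al; apply: W_comp; [exact: (S_reflection Sa).1 | exact: IH].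
Qed.

Lemma separating_wall_exchange u s t A B : W u -> S s -> S t -> wall_sides s A B ->
  u @` C `<=` B -> (u \o t) @` C `<=` A -> s \o u = u \o t.
Proof.
move=> Wu Ss St sAB uCB utCA; have [h [Wh uK hK]] := W_inverse Wu.
have [Ws Rs] := S_reflection Ss.
have Rr : reflections_in d W (h \o s \o u).
  split; first by apply: W_comp => //; exact: W_comp.
  exact: reflection_conj hK uK (W_dist Wh) _ Rs.
have sides := wall_sides_conj hK uK (W_dist Wh) (wall_sidesC sAB).
have CB : C `<=` h @` B by move=> c Cc; rewrite (image_can _ hK uK); apply: uCB; exists c.
have tCA : t @` C `<=` h @` A.
  by move=> _ [c Cc <-]; rewrite (image_can _ hK uK); apply: utCA; exists c.
rewrite -(adjacent_reflection_eq St Rr sides CB tCA).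
by apply: funext => x /=; rewrite hK.
Qed.

Lemma exchange_condition s l A B : S s -> all_in S l -> wall_sides s A B ->
  C `<=` A -> prod_list (s :: l) @` C `<=` A ->
  exists2 k, (k < size l)%N & s \o prod_list (take k l) = prod_list (take k.+1 l).
Proof.
move=> Ss Sl sAB CA wCA; have [Ws Rs] := S_reflection Ss.
have Wv k : W (prod_list (take k l)) by exact: W_prod_list (all_in_take Sl).
(* With u_k := prod_list (take k l), the chambers s u_k C go from sC, beyond F_s,
   to wC, on C's side. *)
pose beyond k := (s \o prod_list (take k l)) @` C `<=` B.
have beyond0 : beyond 0%N.
  by move=> _ [c Cc <-]; rewrite -(ws_swapA sAB); exists c; [exact: CA | rewrite take0].
have nbeyond : ~ beyond (size l).
  have [c Cc] : C !=set0 by case: C_chamber.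
  move=> wCB; have : (A `&` B) (prod_list (s :: l) c).
    by split; [apply: wCA | apply: wCB; rewrite /beyond take_size]; exists c.
  by rewrite (ws_disjoint sAB).
have [k [/andP[_ kl] bk nbk1]] := nat_switch (leq0n (size l)) beyond0 nbeyond.
have vk1 : prod_list (take k.+1 l) = prod_list (take k l) \o nth id l k.
  by rewrite (take_nth id kl) -cats1 prod_list_cat.
have bk1 : (s \o prod_list (take k l) \o nth id l k) @` C `<=` A.
  have := chamber_side (chamber_image (W_comp Ws (W_comp (Wv k) (S_reflection (Sl k kl)).1))
    C_chamber) (S_reflection Ss) sAB.
  by case=> // bk1; case: nbk1; rewrite /beyond vk1.
have e := separating_wall_exchange (W_comp Ws (Wv k)) Ss (Sl k kl) sAB bk bk1.
have sK := reflection_involutive Rs.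
have ex x : prod_list (take k l) x = s (prod_list (take k l) (nth id l k x)).
  by have /= := congr1 (@^~ x) e; rewrite sK.
by exists k => //; apply: funext => x; rewrite vk1 /= ex sK.
Qed.

Lemma reduced_word_behead a l : reduced_word S (prod_list (a :: l)) (a :: l) ->
  reduced_word S (prod_list l) l.
Proof.
case=> /all_in_cons[Sa Sl] _ red; split => // l' Sl' e.
by have := red (a :: l'); rewrite /= e ltnS; apply => //; apply/all_in_cons.
Qed.

Lemma reduced_first_letter_fix s l x : reduced_word S (prod_list (s :: l)) (s :: l) ->
  mclosure d C x -> (prod_list (s :: l) @` mclosure d C) x -> s x = x.
Proof.
move=> [Ssl _ red] Cx wCx; have [Ss Sl] := (all_in_cons _ _ _).1 Ssl.
have Ww := W_prod_list Ssl.
have [A [B [sAB CA _]]] := halfspace_sides Ss.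
apply: contrapT => nsx.
have [Ax|//] := wall_sides_closure sAB CA Cx.
have wCA : prod_list (s :: l) @` C `<=` A.
  exact: chamber_side_closure (chamber_image Ww C_chamber) (S_reflection Ss) sAB
    (mclosure_image (W_dist Ww) wCx) Ax.
have [k kl ex] := exchange_condition Ss Sl sAB CA wCA.
have Sl' : all_in S (take k l ++ drop k.+1 l).
  by apply: all_in_cat; [exact: all_in_take | exact: all_in_drop].
have := red _ Sl' (esym (prod_list_exchange (reflection_involutive (S_reflection Ss).2) ex)).
by rewrite size_cat size_take size_drop kl /=; lia.
Qed.

Lemma reduced_letters_fix l x : reduced_word S (prod_list l) l ->
  mclosure d C x -> (prod_list l @` mclosure d C) x ->
  (\bigcap_(t in letters l) fixpts t) x.
Proof.
elim: l => [|s l IH] red Cx wCx t; first by case=> i; rewrite ltn0.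
have [Ssl _ _] := red; have [_ Rs] := S_reflection ((all_in_cons _ _ _).1 Ssl).1.
have sx := reduced_first_letter_fix red Cx wCx.
case/letters_cons => [->//|lt]; apply: (IH (reduced_word_behead red) Cx _ t lt).
case: wCx => c Cc /= e; exists c => //.
by rewrite -sx -e (reflection_involutive Rs).
Qed.

Lemma reflection_closure_fix t x : S t -> mclosure d C x -> (t @` mclosure d C) x -> t x = x.
Proof.
move=> St Cx [y Cy ty]; subst x; have [A [B [sAB CA _]]] := halfspace_sides St.
have [Ay|Fy] := wall_sides_closure sAB CA Cy; last by rewrite Fy.
have Btx : B (t y) by rewrite -(ws_swapA sAB); exists y.
have [Atx|Ftx] := wall_sides_closure sAB CA Cx; last exact: Ftx.
by have : (A `&` B) (t y) by []; rewrite (ws_disjoint sAB).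
Qed.

Lemma closure_meet_reduced w l : reduced_word S w l ->
  mclosure d C `&` (w @` mclosure d C) = mclosure d C `&` \bigcap_(t in letters l) fixpts t.
Proof.
move=> rw; have [Sl wl _] := rw; subst w.
apply/seteqP; split => x [Cx wx]; split => //; first exact: reduced_letters_fix.
by exists x => //; apply: prod_list_fixpt => i il; apply: wx; exists i.
Qed.

Lemma closure_meet_fixpts (T : set (X -> X)) : T `<=` S ->
  mclosure d C `&` \bigcap_(t in T) fixpts t
    = mclosure d C `&` \bigcap_(t in T) (t @` mclosure d C).
Proof.
move=> TS; apply/seteqP; split => x [Cx Tx]; split => // t Tt; first by exists x => //; apply: Tx.
exact: reflection_closure_fix (TS t Tt) Cx (Tx t Tt).
Qed.

Lemma closure_meet_generated (T : set (X -> X)) : T `<=` S ->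
  mclosure d C `&` \bigcap_(t in T) fixpts t = \bigcap_(v in generated T) (v @` mclosure d C).
Proof.
move=> TS; apply/seteqP; split => [x [Cx Tx] _ [l [Tl <-]]|x Gx].
  exists x => //; apply: prod_list_fixpt => i il; have [t Tt [->|[ta _]]] := Tl i il.
    exact: Tx.
  by rewrite -{1}(Tx t Tt) /=; move/(congr1 (@^~ x)): ta.
have Cx : mclosure d C x by have [y Cy <-] := Gx id (generated_id T).
split => // t Tt; apply: reflection_closure_fix (TS t Tt) Cx _.
exact: Gx _ (generated_letter Tt).
Qed.

End Chambers.

End MetricSpace.

Theorem lemma3p1 (R : realType) (X : Type) (d : X -> X -> R)
  (W : set (X -> X)) (C : set X) (S : set (X -> X)) (w : X -> X) (s : seq (X -> X)) :
  CAT0 d -> cocompact_discrete d W -> chamber d W C -> minimal_wall_set d W C S ->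
  W w -> reduced_word S w s ->
  [/\ mclosure d C `&` (w @` mclosure d C)
        = mclosure d C `&` \bigcap_(t in letters s) fixpts t,
      mclosure d C `&` \bigcap_(t in letters s) fixpts t
        = mclosure d C `&` \bigcap_(t in letters s) (t @` mclosure d C) &
      mclosure d C `&` \bigcap_(t in letters s) (t @` mclosure d C)
        = \bigcap_(v in generated (letters s)) (v @` mclosure d C)].
Proof.
move=> [metric_d geodesic_d _] [[W_group _] W_proper C_props] C_chamber S_walls _ rw.
have [_ C_stab] := C_props C C_chamber.
have sS : letters s `<=` S by case: rw => Ss _ _ t [i il ->]; exact: Ss.
have meet_fixpts : mclosure d C `&` \bigcap_(t in letters s) fixpts t
    = mclosure d C `&` \bigcap_(t in letters s) (t @` mclosure d C).
  exact (closure_meet_fixpts metric_d geodesic_d C_chamber S_walls sS).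
split => //.
  exact (closure_meet_reduced metric_d geodesic_d W_group W_proper C_chamber C_stab S_walls rw).
by rewrite -meet_fixpts; exact (closure_meet_generated metric_d geodesic_d C_chamber S_walls sS).
Qed.
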